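(* For every closed convex cone $K$ in a finite-dimensional real Euclidean space $\mathbb{E}$, the tangential depth of $K$ is at most $\dim K$.
   Context: For a closed convex set $C$ and $x\in C$, $\mathcal{T}(x;C)=\operatorname{cl}\{d: x+\epsilon d\in C\text{ for some }\epsilon>0\}$ is the tangent cone. For a family $\mathcal{K}$ of closed convex sets, $\mathcal{T}(\mathcal{K})$ denotes the set of all tangent cones $\mathcal{T}(x;C)$ with $C\in\mathcal{K}$ and $x\in C$. Set $\mathcal{T}^0(\mathcal{K})=\mathcal{K}$ and $\mathcal{T}^k(\mathcal{K})=\mathcal{T}(\mathcal{T}^{k-1}(\mathcal{K}))$ for $k\ge 1$; for a single set $C$ write $\mathcal{T}^k(C)$ for $\mathcal{T}^k(\{C\})$. The tangential depth of a closed convex set $C$ is the smallest nonnegative integer $k$ such that $\mathcal{T}^{k+1}(C)=\mathcal{T}^k(C)$. *)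

(* classical reals. The Euclidean space E is modelled as R^n
   (vectors Fin.t n -> R) with the standard inner product. *)
From Stdlib Require Fin.
From Stdlib Require Import Reals List.
Open Scope R_scope.

Definition Vec (n : nat) := Fin.t n -> R.

Definition vzero {n} : Vec n := fun _ => 0.
Definition vadd {n} (u v : Vec n) : Vec n := fun i => u i + v i.
Definition vsub {n} (u v : Vec n) : Vec n := fun i => u i - v i.
Definition vscal {n} (a : R) (u : Vec n) : Vec n := fun i => a * u i.

Fixpoint dot (n : nat) : Vec n -> Vec n -> R :=
  match n with
  | O => fun _ _ => 0
  | S m => fun u v => u Fin.F1 * v Fin.F1
                      + dot m (fun i => u (Fin.FS i)) (fun i => v (Fin.FS i))
  end.

Definition norm {n} (u : Vec n) : R := sqrt (dot n u u).

Definition VSet (n : nat) := Vec n -> Prop.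
Definition Family (n : nat) := VSet n -> Prop.

Definition set_eq {n} (A B : VSet n) : Prop := forall x, A x <-> B x.
Definition fam_eq {n} (F G : Family n) : Prop := forall S, F S <-> G S.

Definition closure {n} (A : VSet n) : VSet n :=
  fun x => forall eps, 0 < eps -> exists y, A y /\ norm (vsub x y) < eps.

Definition is_closed {n} (A : VSet n) : Prop := forall x, closure A x -> A x.

Definition is_convex {n} (A : VSet n) : Prop :=
  forall x y t, A x -> A y -> 0 <= t <= 1 ->
    A (vadd (vscal t x) (vscal (1 - t) y)).

Definition is_cone {n} (A : VSet n) : Prop :=
  A vzero /\ forall x a, A x -> 0 <= a -> A (vscal a x).

Definition is_closed_convex_cone {n} (K : VSet n) : Prop :=
  is_closed K /\ is_convex K /\ is_cone K.

Definition tangent_cone {n} (C : VSet n) (x : Vec n) : VSet n :=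
  closure (fun d => exists eps, 0 < eps /\ C (vadd x (vscal eps d))).

Definition Tfam {n} (F : Family n) : Family n :=
  fun S => exists C x, F C /\ C x /\ set_eq S (tangent_cone C x).

(* T^k({C}); families are considered up to extensional equality of sets *)
Fixpoint Titer {n} (C : VSet n) (k : nat) : Family n :=
  match k with
  | O => fun S => set_eq S C
  | S j => Tfam (Titer C j)
  end.

Definition tangential_depth {n} (C : VSet n) (k : nat) : Prop :=
  fam_eq (Titer C (S k)) (Titer C k) /\
  forall j, fam_eq (Titer C (S j)) (Titer C j) -> (k <= j)%nat.

Fixpoint lin_comb {n} (cs : list R) (vs : list (Vec n)) : Vec n :=
  match cs, vs with
  | c :: cs', v :: vs' => vadd (vscal c v) (lin_comb cs' vs')
  | _, _ => vzero
  end.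

Definition lin_indep {n} (vs : list (Vec n)) : Prop :=
  forall cs, length cs = length vs ->
    (forall i, lin_comb cs vs i = 0) -> Forall (fun c => c = 0) cs.

Definition has_aff_indep {n} (C : VSet n) (m : nat) : Prop :=
  exists p0 ps, C p0 /\ Forall C ps /\ length ps = m /\
    lin_indep (map (fun p => vsub p p0) ps).

(* dim C = dimension of the affine hull of C (for nonempty C) *)
Definition aff_dim {n} (C : VSet n) (m : nat) : Prop :=
  has_aff_indep C m /\ ~ has_aff_indep C (S m).

(** The iterates T^j(K) consist of closed convex cones contained in the
    linear span V of K.  For a closed convex cone C and x in C, the tangent
    cone T(x;C) contains C and has x in its lineality space; if -x is already
    in C then T(x;C) = C.  Hence every cone of T^j(K) either already occurs
    one level earlier, or its lineality space contains one more independent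
    vector than its parent's.  Tracing the parents back, every member of
    T^j(K) belongs to some T^i(K), i <= j, and has i independent lineality
    vectors in V; so i <= dim V = dim K.  As T(0;C) = C, the family
    T^i(K) grows with i, and therefore T^(m+1)(K) = T^m(K) for m = dim K. *)

From Stdlib Require Import Reals List Lra Lia Classical FunctionalExtensionality Wf_nat.
From mathcomp Require all_boot all_order all_algebra Rstruct.
Open Scope R_scope.

Lemma vext {n} (u v : Vec n) : (forall i, u i = v i) -> u = v.
Proof. intros; apply functional_extensionality; auto. Qed.

Ltac vec_field := apply vext; intro; unfold vadd, vsub, vscal, vzero; field; try lra.

(** * Closure through the l1 norm *)

(* Closures are computed with the equivalent l1 norm, whose triangle
   inequality is coordinatewise; this avoids Cauchy-Schwarz. *)
Fixpoint l1norm (n : nat) : Vec n -> R :=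
  match n with
  | O => fun _ => 0
  | S m => fun u => Rabs (u Fin.F1) + l1norm m (fun i => u (Fin.FS i))
  end.

Lemma l1norm_nonneg n (u : Vec n) : 0 <= l1norm n u.
Proof.
  induction n; simpl; [lra|].
  pose proof (Rabs_pos (u Fin.F1)); pose proof (IHn (fun i => u (Fin.FS i))); lra.
Qed.

Lemma dot_nonneg n (u : Vec n) : 0 <= dot n u u.
Proof. induction n; simpl; [lra|]. pose proof (IHn (fun i => u (Fin.FS i))); nra. Qed.

Lemma dot_le_l1norm_sqr n (u : Vec n) : dot n u u <= l1norm n u * l1norm n u.
Proof.
  induction n; simpl; [lra|].
  pose proof (IHn (fun i => u (Fin.FS i))).
  pose proof (l1norm_nonneg n (fun i => u (Fin.FS i))).
  pose proof (Rabs_pos (u Fin.F1)).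
  assert (u Fin.F1 * u Fin.F1 = Rabs (u Fin.F1) * Rabs (u Fin.F1)).
  { rewrite <- Rabs_mult, Rabs_right; [lra|]. apply Rle_ge; nra. }
  nra.
Qed.

Lemma norm_le_l1norm n (u : Vec n) : norm u <= l1norm n u.
Proof.
  unfold norm. rewrite <- (sqrt_square (l1norm n u)) by apply l1norm_nonneg.
  apply sqrt_le_1_alt, dot_le_l1norm_sqr.
Qed.

Lemma coord_sqr_le_dot n (u : Vec n) i : u i * u i <= dot n u u.
Proof.
  induction n; [inversion i|].
  revert u; pattern i; apply Fin.caseS'; intros; simpl.
  - pose proof (dot_nonneg n (fun i => u (Fin.FS i))); lra.
  - pose proof (IHn (fun i => u (Fin.FS i)) p); pose proof (Rle_0_sqr (u Fin.F1)).
    unfold Rsqr in *; simpl in *; lra.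
Qed.

Lemma coord_le_norm n (u : Vec n) i : Rabs (u i) <= norm u.
Proof.
  unfold norm. rewrite <- sqrt_Rsqr_abs. apply sqrt_le_1_alt, coord_sqr_le_dot.
Qed.

Lemma l1norm_le_coord_bound n (u : Vec n) a :
  (forall i, Rabs (u i) <= a) -> l1norm n u <= INR n * a.
Proof.
  induction n; intros H; [simpl; lra|].
  pose proof (IHn (fun i => u (Fin.FS i)) (fun i => H (Fin.FS i))).
  pose proof (H Fin.F1). rewrite S_INR. simpl. lra.
Qed.

Lemma l1norm_le_norm n (u : Vec n) : l1norm n u <= INR n * norm u.
Proof. apply l1norm_le_coord_bound, coord_le_norm. Qed.

Lemma l1norm_add n (u v : Vec n) : l1norm n (vadd u v) <= l1norm n u + l1norm n v.
Proof.
  induction n; simpl; [lra|].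
  pose proof (IHn (fun i => u (Fin.FS i)) (fun i => v (Fin.FS i))).
  pose proof (Rabs_triang (u Fin.F1) (v Fin.F1)). unfold vadd in *; lra.
Qed.

Lemma l1norm_scal n a (u : Vec n) : l1norm n (vscal a u) = Rabs a * l1norm n u.
Proof.
  induction n; simpl; [lra|].
  unfold vscal in *. rewrite IHn, Rabs_mult. lra.
Qed.

Lemma l1norm_sub_triangle n (x y z : Vec n) :
  l1norm n (vsub x z) <= l1norm n (vsub x y) + l1norm n (vsub y z).
Proof.
  replace (vsub x z) with (vadd (vsub x y) (vsub y z)) by vec_field. apply l1norm_add.
Qed.

Lemma closure_l1 {n} (A : VSet n) x :
  closure A x <-> forall eps, 0 < eps -> exists y, A y /\ l1norm n (vsub x y) < eps.
Proof.
  pose proof (pos_INR n) as Hn. split; intros H eps He.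
  - destruct (H (eps / (INR n + 1))) as [y [Ay Hy]]; [apply Rdiv_lt_0_compat; lra|].
    exists y; split; auto.
    pose proof (l1norm_le_norm n (vsub x y)); pose proof (norm_le_l1norm n (vsub x y)).
    pose proof (l1norm_nonneg n (vsub x y)).
    apply Rmult_lt_compat_l with (r := INR n + 1) in Hy; [|lra].
    replace ((INR n + 1) * (eps / (INR n + 1))) with eps in Hy by (field; lra). nra.
  - destruct (H eps He) as [y [Ay Hy]]. exists y; split; auto.
    pose proof (norm_le_l1norm n (vsub x y)); lra.
Qed.

Lemma subset_closure {n} (A : VSet n) x : A x -> closure A x.
Proof.
  intros Ax. apply closure_l1. intros eps He. exists x; split; auto.
  replace (vsub x x) with (vscal 0 x) by vec_field.
  rewrite l1norm_scal, Rabs_R0. lra.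
Qed.

Lemma closure_mono {n} (A B : VSet n) :
  (forall x, A x -> B x) -> forall x, closure A x -> closure B x.
Proof. intros H x Hx eps He. destruct (Hx eps He) as [y [Ay Hy]]. exists y; auto. Qed.

Lemma closure_closed {n} (A : VSet n) : is_closed (closure A).
Proof.
  intros x Hx. apply closure_l1. intros eps He.
  rewrite closure_l1 in Hx. destruct (Hx (eps / 2)) as [y [Ay Hy]]; [lra|].
  rewrite closure_l1 in Ay. destruct (Ay (eps / 2)) as [z [Az Hz]]; [lra|].
  exists z; split; auto. pose proof (l1norm_sub_triangle n x y z). lra.
Qed.

Lemma closure_minimal {n} (A B : VSet n) :
  is_closed B -> (forall x, A x -> B x) -> forall x, closure A x -> B x.
Proof. intros HB H x Hx. apply HB. eapply closure_mono; eauto. Qed.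

Lemma closure_convex {n} (A : VSet n) : is_convex A -> is_convex (closure A).
Proof.
  intros HA x y t Hx Hy Ht. apply closure_l1. intros eps He.
  rewrite closure_l1 in Hx, Hy.
  destruct (Hx (eps / 2)) as [a [Aa Ha]]; [lra|].
  destruct (Hy (eps / 2)) as [b [Ab Hb]]; [lra|].
  exists (vadd (vscal t a) (vscal (1 - t) b)). split; [apply HA; auto|].
  replace (vsub (vadd (vscal t x) (vscal (1 - t) y)) (vadd (vscal t a) (vscal (1 - t) b)))
    with (vadd (vscal t (vsub x a)) (vscal (1 - t) (vsub y b))) by vec_field.
  pose proof (l1norm_add n (vscal t (vsub x a)) (vscal (1 - t) (vsub y b))) as Hadd.
  rewrite !l1norm_scal, (Rabs_right t), (Rabs_right (1 - t)) in Hadd by lra.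
  nra.
Qed.

Lemma closure_cone {n} (A : VSet n) : is_cone A -> is_cone (closure A).
Proof.
  intros [H0 HA]. split; [apply subset_closure; auto|].
  intros x a Hx Ha. destruct (Req_dec a 0) as [->|Ha0].
  - apply subset_closure. replace (vscal 0 x) with (@vzero n) by vec_field. auto.
  - apply closure_l1. rewrite closure_l1 in Hx. intros eps He.
    destruct (Hx (eps / a)) as [y [Ay Hy]]; [apply Rdiv_lt_0_compat; lra|].
    exists (vscal a y). split; [apply HA; auto|].
    replace (vsub (vscal a x) (vscal a y)) with (vscal a (vsub x y)) by vec_field.
    rewrite l1norm_scal, Rabs_right by lra.
    apply Rmult_lt_compat_l with (r := a) in Hy; [|lra].
    replace (a * (eps / a)) with eps in Hy by (field; lra). lra.
Qed.

(** * Closed convex cones and their tangent cones *)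

Lemma ccc_add {n} (C : VSet n) u v :
  is_closed_convex_cone C -> C u -> C v -> C (vadd u v).
Proof.
  intros [_ [Hconv [_ Hscal]]] Hu Hv.
  replace (vadd u v) with (vscal 2 (vadd (vscal (1/2) u) (vscal (1 - 1/2) v))) by vec_field.
  apply Hscal; [apply Hconv; auto|]; lra.
Qed.

Lemma ccc_set_eq {n} (A B : VSet n) :
  set_eq A B -> is_closed_convex_cone A -> is_closed_convex_cone B.
Proof.
  intros E [Hcl [Hconv [H0 Hscal]]]. repeat split.
  - intros x Hx. apply E, Hcl. eapply closure_mono; [|exact Hx]. intros; apply E; auto.
  - intros x y t Hx Hy Ht. apply E, Hconv; try apply E; auto.
  - apply E; auto.
  - intros x a Hx Ha. apply E, Hscal; auto; apply E; auto.
Qed.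

Definition feasible_dir {n} (C : VSet n) x : VSet n :=
  fun d => exists eps, 0 < eps /\ C (vadd x (vscal eps d)).

Lemma feasible_step_shrink {n} (C : VSet n) x d e e' :
  is_convex C -> C x -> C (vadd x (vscal e d)) -> 0 < e' <= e -> C (vadd x (vscal e' d)).
Proof.
  intros Hconv Cx Cd He'.
  replace (vadd x (vscal e' d)) with (vadd (vscal (e' / e) (vadd x (vscal e d))) (vscal (1 - e' / e) x))
    by vec_field.
  apply Hconv; auto. split.
  - apply Rlt_le, Rdiv_lt_0_compat; lra.
  - apply Rmult_le_reg_r with e; [lra|]. unfold Rdiv. rewrite Rmult_assoc, Rinv_l; lra.
Qed.

Lemma feasible_dir_convex {n} (C : VSet n) x :
  is_convex C -> C x -> is_convex (feasible_dir C x).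
Proof.
  intros Hconv Cx d1 d2 t [e1 [He1 H1]] [e2 [He2 H2]] Ht.
  pose proof (Rmin_l e1 e2); pose proof (Rmin_r e1 e2).
  assert (He : 0 < Rmin e1 e2) by (apply Rmin_pos; auto).
  exists (Rmin e1 e2); split; auto.
  replace (vadd x (vscal (Rmin e1 e2) (vadd (vscal t d1) (vscal (1 - t) d2))))
    with (vadd (vscal t (vadd x (vscal (Rmin e1 e2) d1)))
               (vscal (1 - t) (vadd x (vscal (Rmin e1 e2) d2)))) by vec_field.
  apply Hconv; auto; eapply feasible_step_shrink; eauto.
Qed.

Lemma feasible_dir_cone {n} (C : VSet n) x : C x -> is_cone (feasible_dir C x).
Proof.
  intros Cx. split.
  - exists 1; split; [lra|]. replace (vadd x (vscal 1 vzero)) with x by vec_field. auto.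
  - intros d a [e [He Hd]] Ha. destruct (Req_dec a 0) as [->|Ha0].
    + exists 1; split; [lra|]. replace (vadd x (vscal 1 (vscal 0 d))) with x by vec_field. auto.
    + exists (e / a); split; [apply Rdiv_lt_0_compat; lra|].
      replace (vadd x (vscal (e / a) (vscal a d))) with (vadd x (vscal e d)) by vec_field. auto.
Qed.

Lemma tangent_cone_ccc {n} (C : VSet n) x :
  is_closed_convex_cone C -> C x -> is_closed_convex_cone (tangent_cone C x).
Proof.
  intros HC Cx. split; [apply closure_closed|]. split.
  - apply closure_convex, feasible_dir_convex; auto; apply HC.
  - apply closure_cone, feasible_dir_cone; auto.
Qed.

Lemma subset_tangent_cone {n} (C : VSet n) x :
  is_closed_convex_cone C -> C x -> forall d, C d -> tangent_cone C x d.
Proof.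
  intros HC Cx d Cd. apply subset_closure. exists 1; split; [lra|].
  replace (vadd x (vscal 1 d)) with (vadd x d) by vec_field. apply ccc_add; auto.
Qed.

(** * Subspaces and lineality spaces *)

Definition is_subspace {n} (V : VSet n) : Prop :=
  V vzero /\ (forall u v, V u -> V v -> V (vadd u v)) /\ (forall a u, V u -> V (vscal a u)).

Definition lineality {n} (C : VSet n) : VSet n := fun v => C v /\ C (vscal (-1) v).

Lemma lineality_subspace {n} (C : VSet n) :
  is_closed_convex_cone C -> is_subspace (lineality C).
Proof.
  intros HC. pose proof HC as [_ [_ [H0 Hscal]]]. split; [|split].
  - split; [|replace (vscal (-1) vzero) with (@vzero n) by vec_field]; auto.
  - intros u v [Hu Hu'] [Hv Hv']. split; [apply ccc_add; auto|].
    replace (vscal (-1) (vadd u v)) with (vadd (vscal (-1) u) (vscal (-1) v)) by vec_field.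
    apply ccc_add; auto.
  - intros a u [Hu Hu']. destruct (Rle_dec 0 a).
    + split; [apply Hscal; auto|].
      replace (vscal (-1) (vscal a u)) with (vscal a (vscal (-1) u)) by vec_field.
      apply Hscal; auto.
    + split.
      * replace (vscal a u) with (vscal (-a) (vscal (-1) u)) by vec_field. apply Hscal; auto; lra.
      * replace (vscal (-1) (vscal a u)) with (vscal (-a) u) by vec_field. apply Hscal; auto; lra.
Qed.

Lemma lin_comb_subspace {n} (V : VSet n) ys :
  is_subspace V -> Forall V ys -> forall cs, V (lin_comb cs ys).
Proof.
  intros [H0 [Hadd Hscal]] H. induction H; intros [|c cs]; simpl; auto.
Qed.

Lemma lin_indep_nil {n} : lin_indep (@nil (Vec n)).
Proof. intros [|c cs] Hl _; [constructor|discriminate]. Qed.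

Lemma lin_indep_cons {n} (V : VSet n) x ys :
  is_subspace V -> Forall V ys -> lin_indep ys -> ~ V x -> lin_indep (x :: ys).
Proof.
  intros HV Hys Hi Hx [|c cs] Hl Hz; [discriminate|].
  simpl in Hl, Hz. injection Hl as Hl.
  destruct (Req_dec c 0) as [->|Hc].
  - constructor; auto. apply Hi; auto. intros i. specialize (Hz i). unfold vadd, vscal in Hz. lra.
  - exfalso. apply Hx.
    replace x with (vscal (- / c) (lin_comb cs ys)).
    + apply HV, lin_comb_subspace; auto.
    + apply vext; intros i. specialize (Hz i). unfold vadd, vscal in *.
      apply Rmult_eq_reg_l with c; auto. field_simplify; auto. lra.
Qed.

Lemma tangent_cone_lineality {n} (C : VSet n) x :
  is_closed_convex_cone C -> C x -> lineality (tangent_cone C x) x.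
Proof.
  intros HC Cx. split; apply subset_closure; exists 1; split; try lra.
  - replace (vadd x (vscal 1 x)) with (vadd x x) by vec_field. apply ccc_add; auto.
  - replace (vadd x (vscal 1 (vscal (-1) x))) with (@vzero n) by vec_field. apply HC.
Qed.

(* Moving along a lineality direction does not leave C, so no new feasible
   directions appear. *)
Lemma tangent_cone_at_lineality {n} (C : VSet n) x :
  is_closed_convex_cone C -> lineality C x -> set_eq (tangent_cone C x) C.
Proof.
  intros HC [Cx Cx'] d. split; [|apply subset_tangent_cone; auto].
  apply closure_minimal; [apply HC|]. intros d' [e [He Hd]].
  replace d' with (vscal (/ e) (vadd (vadd x (vscal e d')) (vscal (-1) x))) by vec_field.
  apply HC; [apply ccc_add; auto|]. apply Rlt_le, Rinv_0_lt_compat; auto.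
Qed.

Lemma tangent_cone_sub_subspace {n} (C V : VSet n) x :
  is_closed V -> is_subspace V -> (forall d, C d -> V d) -> C x ->
  forall d, tangent_cone C x d -> V d.
Proof.
  intros Hcl [_ [Hadd Hscal]] HCV Cx. apply closure_minimal; auto.
  intros d [e [He Hd]].
  replace d with (vscal (/ e) (vadd (vadd x (vscal e d)) (vscal (-1) x))) by vec_field.
  apply Hscal, Hadd; auto.
Qed.

(** * The iterated tangent families *)

Section Iterates.
Variables (n : nat) (K : VSet n).
Hypothesis HK : is_closed_convex_cone K.

Lemma Titer_set_eq i A B : Titer K i A -> set_eq A B -> Titer K i B.
Proof.
  destruct i; simpl.
  - intros H E x. specialize (H x). specialize (E x). tauto.
  - intros [C [x [HC [Cx E']]]] E. exists C, x. repeat split; auto; intros.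
    + apply E', E; auto.
    + apply E, E'; auto.
Qed.

Lemma Titer_ccc i S : Titer K i S -> is_closed_convex_cone S.
Proof.
  revert S; induction i; simpl; intros S H.
  - apply ccc_set_eq with K; auto. intros x; specialize (H x); tauto.
  - destruct H as [C [x [HC [Cx E]]]]. apply ccc_set_eq with (tangent_cone C x).
    + intros y; specialize (E y); tauto.
    + apply tangent_cone_ccc; eauto.
Qed.

Lemma Titer_sub_subspace V :
  is_closed V -> is_subspace V -> (forall x, K x -> V x) ->
  forall i S, Titer K i S -> forall x, S x -> V x.
Proof.
  intros Hcl HV HKV. induction i; simpl; intros S H y Hy.
  - apply HKV, H, Hy.
  - destruct H as [C [x [HC [Cx E]]]].
    eapply (tangent_cone_sub_subspace C V x); eauto. apply E, Hy.
Qed.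

Lemma Titer_succ i A : Titer K i A -> Titer K (S i) A.
Proof.
  intros H. pose proof (Titer_ccc i A H) as HA.
  exists A, vzero. split; [|split]; auto; [apply HA|].
  intros d. symmetry. apply tangent_cone_at_lineality; auto.
  apply lineality_subspace; auto.
Qed.

Lemma Titer_mono i j A : (i <= j)%nat -> Titer K i A -> Titer K j A.
Proof. induction 1; auto using Titer_succ. Qed.

Definition has_indep_lineality (A : VSet n) (i : nat) : Prop :=
  exists ys, lin_indep ys /\ Forall (lineality A) ys /\ length ys = i.

Lemma Titer_lineality_rank j A :
  Titer K j A -> exists i, (i <= j)%nat /\ Titer K i A /\ has_indep_lineality A i.
Proof.
  revert A; induction j; intros A H.
  - exists 0%nat; split; [lia|]. split; [exact H|].
    exists nil; split; [apply lin_indep_nil|split; auto].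
  - pose proof H as [C [x [HC [Cx E]]]].
    destruct (IHj C HC) as [i [Hi [HCi [ys [Hys [Hlin Hlen]]]]]].
    pose proof (Titer_ccc j C HC) as HCccc.
    destruct (classic (C (vscal (-1) x))) as [Hx|Hx].
    + assert (EC : set_eq C A).
      { intros y. rewrite (E y). symmetry. apply tangent_cone_at_lineality; auto. split; auto. }
      exists i; split; [lia|]. split; [eapply Titer_set_eq; eauto|].
      exists ys; repeat split; auto. eapply Forall_impl; [|exact Hlin].
      intros y [Hy Hy']; split; apply EC; auto.
    + exists (S i); split; [lia|]. split; [exists C, x; auto|].
      exists (x :: ys). split; [|split; [constructor|simpl; lia]].
      * eapply lin_indep_cons; eauto using lineality_subspace. intros [_ ?]; auto.
      * destruct (tangent_cone_lineality C x HCccc Cx). split; apply E; auto.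
      * eapply Forall_impl; [|exact Hlin].
        intros y [Hy Hy']; split; apply E, subset_tangent_cone; auto.
Qed.

Lemma Titer_stable V m :
  is_closed V -> is_subspace V -> (forall x, K x -> V x) ->
  (forall ys, lin_indep ys -> Forall V ys -> (length ys <= m)%nat) ->
  fam_eq (Titer K (S m)) (Titer K m).
Proof.
  intros Hcl HV HKV Hdim A; split; [|apply Titer_succ].
  intros H. destruct (Titer_lineality_rank (S m) A H) as [i [_ [HAi [ys [Hys [Hlin Hlen]]]]]].
  apply Titer_mono with i; auto. rewrite <- Hlen. apply Hdim; auto.
  eapply Forall_impl; [|exact Hlin].
  intros y [Hy _]. eapply Titer_sub_subspace; eauto.
Qed.

Lemma tangential_depth_le m :
  fam_eq (Titer K (S m)) (Titer K m) -> exists k, tangential_depth K k /\ (k <= m)%nat.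
Proof.
  intros Hm.
  destruct (dec_inh_nat_subset_has_unique_least_element
              (fun j => fam_eq (Titer K (S j)) (Titer K j)))
    as [k [[Hk Hleast] _]]; eauto using classic.
  exists k. split; [split|]; auto.
Qed.

End Iterates.

(** * Row spaces *)

Module RowSpan.
Import all_boot all_order all_algebra Rstruct.
Import Order.TTheory GRing.Theory Num.Theory.

Section RowSpan.
Variable n : nat.
Local Open Scope ring_scope.

Definition fin_of_ord (j : 'I_n) : Fin.t n := Fin.of_nat_lt (elimT ssrnat.ltP (ltn_ord j)).

Lemma fin_of_ord_surj (k : Fin.t n) : exists j, fin_of_ord j = k.
Proof.
  destruct (Fin.to_nat k) as [p Hp] eqn:E.
  have Hp' : (p < n)%N by apply/ssrnat.ltP.
  exists (Ordinal Hp'). rewrite /fin_of_ord /= -(Fin.of_nat_to_nat_inv k) E /=.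
  exact: Fin.of_nat_ext.
Qed.

Lemma nth_List_nth (T : Type) (x0 : T) (s : list T) i : nth x0 s i = List.nth i s x0.
Proof. by elim: s i => [|x s IH] [|i] //=. Qed.

Definition rowv (v : Vec n) : 'rV[R]_n := \row_j v (fin_of_ord j).

Lemma rowv_add u v : rowv (vadd u v) = rowv u + rowv v.
Proof. by apply/rowP => j; rewrite !mxE. Qed.

Lemma rowv_sub u v : rowv (vsub u v) = rowv u - rowv v.
Proof. by apply/rowP => j; rewrite !mxE. Qed.

Lemma rowv_scal a u : rowv (vscal a u) = a *: rowv u.
Proof. by apply/rowP => j; rewrite !mxE. Qed.

Lemma rowv_zero : rowv vzero = 0.
Proof. by apply/rowP => j; rewrite !mxE. Qed.

Lemma rowv_eq0 z : rowv z = 0 -> z = vzero.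
Proof.
  move=> Hz; apply: functional_extensionality => k.
  have [j <-] := fin_of_ord_surj k.
  by have := congr1 (fun M : 'rV[R]_n => M ord0 j) Hz; rewrite !mxE.
Qed.

Lemma rowv_lin_comb (ys : list (Vec n)) (cs : list R) : size cs = size ys ->
  rowv (lin_comb cs ys) = \sum_(i < size ys) nth 0 cs i *: rowv (nth vzero ys i).
Proof.
  elim: ys cs => [|y ys IH] [|c cs] //= Hsize; first by rewrite big_ord0 rowv_zero.
  by rewrite big_ord_recl /= rowv_add rowv_scal IH //; case: Hsize.
Qed.

Lemma lin_indep_row_free {ys : list (Vec n)} :
  lin_indep ys -> row_free (\matrix_(i < size ys) rowv (nth vzero ys i)).
Proof.
  move=> Hi; apply: inj_row_free => w Hw.
  pose cs := map (w ord0) (enum 'I_(size ys)).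
  have nth_cs (i : 'I_(size ys)) : nth 0 cs i = w ord0 i by rewrite (nth_map i) ?size_enum_ord ?nth_ord_enum.
  have Hcs : size cs = size ys by rewrite size_map size_enum_ord.
  have Hcomb : rowv (lin_comb cs ys) = 0.
  { rewrite -Hw rowv_lin_comb // mulmx_sum_row.
    by apply: eq_bigr => i _; rewrite rowK nth_cs. }
  have Hzero := Hi cs Hcs (fun i => f_equal (fun f => f i) (rowv_eq0 _ Hcomb)).
  apply/rowP => i; rewrite mxE -nth_cs.
  move/Forall_forall: Hzero; apply; rewrite nth_List_nth; apply: nth_In.
  by apply/ssrnat.ltP; rewrite -[length _]/(size cs) Hcs.
Qed.

Lemma lin_indep_size_le_rank {m} {B : 'M[R]_(m, n)} {ys : list (Vec n)} :
  lin_indep ys -> (forall y, In y ys -> (rowv y <= B)%MS) -> (size ys <= \rank B)%N.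
Proof.
  move=> Hi Hys.
  have Hsub : (\matrix_(i < size ys) rowv (nth vzero ys i) <= B)%MS.
  { apply/row_subP => i; rewrite rowK nth_List_nth; apply: Hys; apply: nth_In.
    apply/ssrnat.ltP; exact: ltn_ord. }
  by have := mxrankS Hsub; rewrite (eqP (lin_indep_row_free Hi)).
Qed.

Lemma mulmx_coord_bound (u : Vec n) m (N : 'M[R]_(n, m)) j :
  Rle (Rabs ((rowv u *m N) ord0 j)) (norm u * \sum_i `|N i j|).
Proof.
  apply/RleP; rewrite mxE RabsE RmultE mulr_sumr.
  apply: (le_trans (ler_norm_sum _ _ _)); apply: ler_sum => i _.
  rewrite mxE normrM; apply: ler_wpM2r => //.
  by apply/RleP; rewrite -RabsE; apply: coord_le_norm.
Qed.

(* A row space is the common zero set of the columns of its cokernel,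
   each of which is a continuous linear form. *)
Lemma rowspace_closed m (B : 'M[R]_(m, n)) : is_closed (fun x => (rowv x <= B)%MS).
Proof.
  move=> x Hx; rewrite submxE; apply/eqP/rowP => j; rewrite [RHS]mxE.
  set N := cokermx B; set c := \sum_i `|N i j|; set e := (rowv x *m N) ord0 j.
  have Hc : Rle 0 c by apply/RleP; apply: sumr_ge0 => i _; apply: normr_ge0.
  have Hdist y : (rowv y <= B)%MS -> Rle (Rabs e) (norm (vsub x y) * c).
  { rewrite submxE => /eqP Hy.
    have -> : e = (rowv (vsub x y) *m N) ord0 j by rewrite rowv_sub mulmxBl Hy subr0.
    exact: mulmx_coord_bound. }
  case: (Req_dec e 0) => // He; exfalso.
  have Habs := Rabs_pos_lt e He.
  have [y [Hy Hxy]] : exists y, (rowv y <= B)%MS /\ Rlt (norm (vsub x y)) (Rabs e / (c + 1)).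
  { apply: Hx; apply: Rdiv_lt_0_compat; lra. }
  have Hfar := Hdist y Hy.
  have Hn : Rle 0 (norm (vsub x y)) by apply: sqrt_pos.
  have Hlt : Rlt (norm (vsub x y) * (c + 1)) (Rabs e).
  { apply: (Rmult_lt_reg_r (/ (c + 1))); first by apply: Rinv_0_lt_compat; lra.
    rewrite Rmult_assoc Rinv_r; last by lra. by rewrite Rmult_1_r. }
  nra.
Qed.

Definition span (bs : list (Vec n)) : VSet n :=
  fun x => (rowv x <= \matrix_(i < size bs) rowv (nth vzero bs i))%MS.

Lemma span_subspace bs : is_subspace (span bs).
Proof.
  split; [|split] => [|u v Hu Hv|a u Hu]; rewrite /span.
  - by rewrite rowv_zero sub0mx.
  - by rewrite rowv_add addmx_sub.
  - by rewrite rowv_scal scalemx_sub.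
Qed.

Lemma span_closed bs : is_closed (span bs).
Proof. exact: rowspace_closed. Qed.

Lemma span_spanning bs : Forall (span bs) bs.
Proof.
  apply/Forall_forall => b /(In_nth bs b vzero) [i [/ssrnat.ltP Hi <-]].
  rewrite -nth_List_nth.
  by rewrite /span -(rowK (fun i : 'I_(size bs) => rowv (nth vzero bs i)) (Ordinal Hi)) row_sub.
Qed.

Lemma span_indep_length bs ys :
  lin_indep ys -> Forall (span bs) ys -> (length ys <= length bs)%coq_nat.
Proof.
  move=> Hi /Forall_forall Hys; apply/ssrnat.leP.
  apply: leq_trans (lin_indep_size_le_rank Hi Hys) _.
  exact: rank_leq_row.
Qed.

End RowSpan.
End RowSpan.

Lemma exists_maximal_indep {n} (C : VSet n) m :
  (forall ys, Forall C ys -> lin_indep ys -> length ys <> S m) ->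
  exists bs, Forall C bs /\ lin_indep bs /\ (length bs <= m)%nat /\
    forall x, C x -> ~ lin_indep (x :: bs).
Proof.
  intros Hbound.
  set (P j := (j <= m)%nat /\ exists bs, Forall C bs /\ lin_indep bs /\ length bs = (m - j)%nat).
  destruct (dec_inh_nat_subset_has_unique_least_element P)
    as [j [[[Hj [bs [HCbs [Hbs Hlen]]]] Hleast] _]]; eauto using classic.
  { exists m. split; [lia|]. exists nil. split; [|split]; auto using lin_indep_nil. simpl; lia. }
  exists bs. split; [|split; [|split]]; auto; [lia|].
  intros x Cx Hx. destruct j as [|j].
  - apply (Hbound (x :: bs)); auto. simpl; lia.
  - enough (S j <= j)%nat by lia.
    apply Hleast. split; [lia|]. exists (x :: bs). split; [|split]; auto. simpl; lia.
Qed.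

Theorem theorem3p2 (n : nat) (K : VSet n) (m : nat) :
  is_closed_convex_cone K -> aff_dim K m ->
  exists k, tangential_depth K k /\ (k <= m)%nat.
Proof.
  intros HK [_ Hdim].
  assert (Hbound : forall ys, Forall K ys -> lin_indep ys -> length ys <> S m).
  { intros ys HKys Hys Hlen. apply Hdim. exists vzero, ys.
    rewrite (map_ext _ (fun p => p)), map_id by (intros; vec_field).
    repeat split; auto. apply HK. }
  destruct (exists_maximal_indep K m Hbound) as [bs [HKbs [Hbs [Hlen Hmax]]]].
  pose proof (RowSpan.span_subspace n bs) as HV.
  assert (HKV : forall x, K x -> RowSpan.span n bs x).
  { intros x Kx. apply NNPP. intros HVx. apply (Hmax x Kx).
    eapply lin_indep_cons; eauto using RowSpan.span_spanning. }
  apply tangential_depth_le; auto.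
  apply Titer_stable with (RowSpan.span n bs); auto using RowSpan.span_closed.
  intros ys Hys HVys. pose proof (RowSpan.span_indep_length n bs ys Hys HVys). lia.
Qed.
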